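(* Let $n\ge 1$, $G=\langle a_1,b_1,\ldots,a_n,b_n \mid p_1p_2\cdots p_n\rangle$ with $p_i=a_ib_ia_i^{-1}b_i^{-1}$, $p=p_1\cdots p_n$, and let $P$ be the free resolution $0\to P_2\xrightarrow{d_2}P_1\xrightarrow{d_1}P_0\xrightarrow{\varepsilon}\mathbb{Z}\to0$ of $\mathbb{Z}$ over $\mathbb{Z}G$ with $P_0=\mathbb{Z}G\,x$, $P_1$ free on $y_1,\ldots,y_n,z_1,\ldots,z_n$, $P_2=\mathbb{Z}G\,w$, $\varepsilon(x)=1$, $d_1(y_i)=(a_i-1)x$, $d_1(z_i)=(b_i-1)x$, $d_2(w)=\sum_{i=1}^n\bigl(\frac{\partial p}{\partial a_i}y_i+\frac{\partial p}{\partial b_i}z_i\bigr)$. Then there is a diagonal approximation $\Delta\colon P\to P\otimes P$ such that \begin{align*} &\Delta_0(x)=x\otimes x,\qquad \Delta_1(y_i)=y_i\otimes a_ix+x\otimes y_i,\qquad \Delta_1(z_i)=z_i\otimes b_ix+x\otimes z_i,\\ &\Delta_{02}(w)=x\otimes w, \end{align*} and \begin{align*} \Delta_{11}(w)={}&\sum_{i=1}^n\Bigl[\sum_{j=1}^{i-1}(p_1\cdots p_{j-1})(1-a_jb_ja_j^{-1})y_j\otimes(p_1\cdots p_{i-1})y_i\\ &\qquad+\sum_{j=1}^{i-1}(p_1\cdots p_{j-1})a_j(1-b_ja_j^{-1}b_j^{-1})z_j\otimes(p_1\cdots p_{i-1})y_i\Bigr]\\ &-\sum_{i=1}^{n-1}\Bigl[\sum_{j=1}^{i-1}\Bigl((p_1\cdots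 p_{j-1})(1-a_jb_ja_j^{-1})y_j\otimes(p_1\cdots p_{i-1})a_ib_ia_i^{-1}y_i\\ &\qquad\qquad+(p_1\cdots p_{j-1})a_j(1-b_ja_j^{-1}b_j^{-1})z_j\otimes(p_1\cdots p_{i-1})a_ib_ia_i^{-1}y_i\Bigr)\\ &\qquad+(p_1\cdots p_{i-1})(1-a_ib_ia_i^{-1})y_i\otimes(p_1\cdots p_{i-1})a_ib_ia_i^{-1}y_i\\ &\qquad+(p_1\cdots p_{i-1})a_iz_i\otimes(p_1\cdots p_{i-1})a_ib_ia_i^{-1}y_i\Bigr]\\ &+\sum_{i=1}^{n}\Bigl[\sum_{j=1}^{i-1}\Bigl((p_1\cdots p_{j-1})(1-a_jb_ja_j^{-1})y_j\otimes(p_1\cdots p_{i-1})a_iz_i\\ &\qquad\qquad+(p_1\cdots p_{j-1})a_j(1-b_ja_j^{-1}b_j^{-1})z_j\otimes(p_1\cdots p_{i-1})a_iz_i\Bigr)\\ &\qquad+(p_1\cdots p_{i-1})y_i\otimes(p_1\cdots p_{i-1})a_iz_i\Bigr]\\ &-\sum_{i=1}^{n-1}\Bigl[\sum_{j=1}^{i}\Bigl((p_1\cdots p_{j-1})(1-a_jb_ja_j^{-1})y_j\otimes(p_1\cdots p_i)z_i\\ &\qquad\qquad+(p_1\cdots p_{j-1})a_j(1-b_ja_j^{-1}b_j^{-1})z_j\otimes(p_1\cdots p_i)z_i\Bigr)\Bigr]\\ &-z_n\otimes b_ny_n. \end{align*}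
   Context: Fox derivatives: for a free group on generators $g_1,\dots,g_m$, $\partial/\partial g_i$ is the additive map with $\partial g_j/\partial g_i=\delta_{ij}$ and $\partial(uv)/\partial g_i=\partial u/\partial g_i+u\,\partial v/\partial g_i$, followed by passage to $\mathbb{Z}G$. The complex $P\otimes P$ has $(P\otimes P)_m=\bigoplus_{r+s=m}P_r\otimes_{\mathbb{Z}}P_s$, with $G$ acting diagonally, $g(u\otimes v)=gu\otimes gv$, differential $\partial(u\otimes v)=du\otimes v+(-1)^r u\otimes dv$ for $u\in P_r$, and augmentation $\varepsilon\otimes\varepsilon\colon P_0\otimes P_0\to\mathbb{Z}\otimes\mathbb{Z}\cong\mathbb{Z}$; it is again a free resolution of $\mathbb{Z}$ over $\mathbb{Z}G$. A diagonal approximation is a $\mathbb{Z}G$-chain map $\Delta\colon P\to P\otimes P$ with $(\varepsilon\otimes\varepsilon)\Delta_0=\varepsilon$. For $r+s=m$, $\Delta_{rs}\colon P_m\to P_r\otimes P_s$ denotes $\Delta_m$ followed by the projection onto the summand $P_r\otimes P_s$. Empty products $p_1\cdots p_0$ equal $1$, and empty sums are $0$. *)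

From HB Require Import structures.
From mathcomp Require Import all_boot all_algebra.
From mathcomp Require Import freeg.

Set Implicit Arguments.
Unset Strict Implicit.
Unset Printing Implicit Defensive.

Import GRing.Theory.
Local Open Scope ring_scope.

Record group_on (G : Type) := GroupOn {
  gmul : G -> G -> G;
  ginv : G -> G;
  gone : G;
  gmulA : forall x y z, gmul x (gmul y z) = gmul (gmul x y) z;
  gmul1 : forall x, gmul gone x = x;
  gmulV : forall x, gmul (ginv x) x = gone }.

Definition group_hom (G H : Type) (GG : group_on G) (HH : group_on H)
  (phi : G -> H) : Prop :=
  forall x y, phi (gmul GG x y) = gmul HH (phi x) (phi y).

(* generators: inl i = a_i, inr i = b_i  (i : 'I_n is the 0-based index) *)
Definition gen (n : nat) := ('I_n + 'I_n)%type.
(* words in the free group: letters (g, false) = g, (g, true) = g^-1 *)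
Definition word (n : nat) := seq (gen n * bool).

Definition letter_val (G : Type) (GG : group_on G) n (t : gen n -> G)
  (l : gen n * bool) : G :=
  if l.2 then ginv GG (t l.1) else t l.1.

Definition eval_word (G : Type) (GG : group_on G) n (t : gen n -> G)
  (w : word n) : G :=
  foldr (fun l acc => gmul GG (letter_val GG t l) acc) (gone GG) w.

Definition pblock n (i : 'I_n) : word n :=
  [:: (inl i, false); (inr i, false); (inl i, true); (inr i, true)].
Definition relator n : word n := flatten [seq pblock i | i <- enum 'I_n].
Definition prefix_word n (k : nat) : word n :=
  flatten [seq pblock i | i <- take k (enum 'I_n)].

Definition is_presentation n (G : Type) (GG : group_on G) (t : gen n -> G) : Prop :=
  eval_word GG t (relator n) = gone GG /\
  forall (H : Type) (HH : group_on H) (t' : gen n -> H),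
    eval_word HH t' (relator n) = gone HH ->
    (exists phi : G -> H, group_hom GG HH phi /\ forall g, phi (t g) = t' g) /\
    (forall phi psi : G -> H, group_hom GG HH phi -> group_hom GG HH psi ->
       (forall g, phi (t g) = t' g) -> (forall g, psi (t g) = t' g) ->
       forall x, phi x = psi x).

(* cells (free generators) of P: x (deg 0), y_i, z_i (deg 1), w (deg 2) *)
Definition cell (n : nat) := ((unit + ('I_n + 'I_n)) + unit)%type.
Definition cX n : cell n := inl (inl tt).
Definition cY n (i : 'I_n) : cell n := inl (inr (inl i)).
Definition cZ n (i : 'I_n) : cell n := inl (inr (inr i)).
Definition cW n : cell n := inr tt.
Definition cdeg n (c : cell n) : nat :=
  match c with inl (inl _) => 0 | inl (inr _) => 1 | inr _ => 2 end%N.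

(* Z G ; the module P = P_0 + P_1 + P_2 (free Z-module on G x cells, i.e.
   the free ZG-module on the cells); P (x)_Z P = free Z-module on pairs. *)
Notation ZG G := {freeg G / int}.
Notation Pmod G n := {freeg (G * cell n) / int}.
Notation PPmod G n := {freeg ((G * cell n) * (G * cell n)) / int}.

Section Resolution.
Context (n : nat) (G : choiceType) (GG : group_on G) (t : gen n -> G).

Local Notation gm := (gmul GG).
Local Notation gi := (ginv GG).
Local Notation a i := (t (inl i)).
Local Notation b i := (t (inr i)).

Definition gr (g : G) : ZG G := << g >>.

Definition act (B : choiceType) (r : ZG G) (u : {freeg (G * B) / int}) :
    {freeg (G * B) / int} :=
  fglift (fun g => fglift (fun k => << (gm g k.1, k.2) >>) u) r.

Definition actPP (r : ZG G) (v : PPmod G n) : PPmod G n :=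
  fglift (fun g => fglift (fun k =>
     << ((gm g k.1.1, k.1.2), (gm g k.2.1, k.2.2)) >>) v) r.

Definition tens (u v : Pmod G n) : PPmod G n :=
  fglift (fun k1 => fglift (fun k2 => << (k1, k2) >>) v) u.

Definition xg : Pmod G n := << (gone GG, cX n) >>.
Definition yg (i : 'I_n) : Pmod G n := << (gone GG, cY i) >>.
Definition zg (i : 'I_n) : Pmod G n := << (gone GG, cZ i) >>.
Definition wg : Pmod G n := << (gone GG, cW n) >>.

Definition lmulZG (h : G) (r : ZG G) : ZG G := fglift (fun k => << gm h k >>) r.

Fixpoint fox (g : gen n) (w : word n) : ZG G :=
  match w with
  | [::] => 0
  | l :: w' =>
      (if l.1 == g then (if l.2 then - gr (gi (t g)) else gr (gone GG)) else 0)
      + lmulZG (letter_val GG t l) (fox g w')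
  end.

Definition dbase (k : G * cell n) : Pmod G n :=
  match k.2 with
  | inl (inl _) => 0
  | inl (inr (inl i)) => << (gm k.1 (a i), cX n) >> - << (k.1, cX n) >>
  | inl (inr (inr i)) => << (gm k.1 (b i), cX n) >> - << (k.1, cX n) >>
  | inr _ => act (gr k.1) (\sum_(i < n)
        (act (fox (inl i) (relator n)) (yg i) + act (fox (inr i) (relator n)) (zg i)))
  end.

Definition dP (u : Pmod G n) : Pmod G n := fglift dbase u.

Definition dPP (v : PPmod G n) : PPmod G n :=
  fglift (fun k => tens (dP << k.1 >>) << k.2 >>
                   + ((-1) ^+ cdeg k.1.2) *: tens << k.1 >> (dP << k.2 >>)) v.

Definition epsP (u : Pmod G n) : int :=
  fglift (fun k => (k.2 == cX n)%:R : int^o) u.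
Definition epsPP (v : PPmod G n) : int :=
  fglift (fun k => ((k.1.2 == cX n) && (k.2.2 == cX n))%:R : int^o) v.

Definition homogP (m : nat) (u : Pmod G n) : bool :=
  all (fun k => cdeg k.2 == m) (dom u).
Definition homogPP (m : nat) (v : PPmod G n) : bool :=
  all (fun k => (cdeg k.1.2 + cdeg k.2.2)%N == m) (dom v).

(* Delta_{rs} : projection onto P_r (x) P_s *)
Definition projPP (r s : nat) (v : PPmod G n) : PPmod G n :=
  fgmap (fun k => (cdeg k.1.2 == r) && (cdeg k.2.2 == s)) id v.

Definition is_diag_approx (D : Pmod G n -> PPmod G n) : Prop :=
  [/\ forall u v, D (u + v) = D u + D v,
      forall r u, D (act r u) = actPP r (D u),
      forall m u, homogP m u -> homogPP m (D u),
      forall u, dPP (D u) = D (dP u)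
    & forall u, homogP 0 u -> epsPP (D u) = epsP u].

Definition pre (k : nat) : G := eval_word GG t (prefix_word n k).

(* (p_1..p_{j-1})(1 - a_j b_j a_j^-1) y_j  (j 0-based) *)
Definition Aj (j : 'I_n) : Pmod G n :=
  act (gr (pre j) - gr (gm (gm (gm (pre j) (a j)) (b j)) (gi (a j)))) (yg j).
(* (p_1..p_{j-1}) a_j (1 - b_j a_j^-1 b_j^-1) z_j *)
Definition Bj (j : 'I_n) : Pmod G n :=
  act (gr (gm (pre j) (a j))
       - gr (gm (gm (gm (gm (pre j) (a j)) (b j)) (gi (a j))) (gi (b j)))) (zg j).
Definition Tj (j : 'I_n) (v : Pmod G n) : PPmod G n := tens (Aj j) v + tens (Bj j) v.

(* (p_1..p_{i-1}) a_i b_i a_i^-1 *)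
Definition cabi (i : 'I_n) : G := gm (gm (gm (pre i) (a i)) (b i)) (gi (a i)).

Definition Delta11_formula : PPmod G n :=
  (\sum_(i < n) \sum_(j < n | (j < i)%N) Tj j (act (gr (pre i)) (yg i)))
  - (\sum_(i < n | (i.+1 < n)%N)
       ((\sum_(j < n | (j < i)%N) Tj j (act (gr (cabi i)) (yg i)))
        + tens (Aj i) (act (gr (cabi i)) (yg i))
        + tens (act (gr (gm (pre i) (a i))) (zg i)) (act (gr (cabi i)) (yg i))))
  + (\sum_(i < n)
       ((\sum_(j < n | (j < i)%N) Tj j (act (gr (gm (pre i) (a i))) (zg i)))
        + tens (act (gr (pre i)) (yg i)) (act (gr (gm (pre i) (a i))) (zg i))))
  - (\sum_(i < n | (i.+1 < n)%N)
       \sum_(j < n | (j <= i)%N) Tj j (act (gr (pre i.+1)) (zg i)))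
  - (\sum_(i < n | i.+1 == n) tens (zg i) (act (gr (b i)) (yg i))).

End Resolution.

(* A ZG-linear map P -> P ⊗ P is determined by its values on the cells; on x, y_i, z_i
   we take the standard diagonal.  For a word u let C(u) = Σ_g (∂u/∂g) e_g in P_1 be its
   Fox chain, so that d C(u) = (u - 1) x and d w = C(p).  Defining Q(u) in P_1 ⊗ P_1 letter
   by letter, Q(uv) = Q(u) + C(u) ⊗ u C(v) + u Q(v), Q(g) = 0, Q(g^-1) = g^-1 e_g ⊗ g^-1 e_g,
   one gets ∂Q(u) = Δ C(u) - x ⊗ C(u) - C(u) ⊗ u x.  As p = 1 in G, C(p) is a cycle and
     Δ(w) = w ⊗ b_n a_n x + Q(p) + C(p) ⊗ (b_n y_n + z_n) + x ⊗ w
   satisfies ∂Δ(w) = Δ(C(p)).  Expanding Q(p) along p = p_1 ⋯ p_n, the contributions of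
   the four letters of each p_i telescope to the stated formula for Δ_11(w). *)

From Pilot Require Import Defs.
From HB Require Import structures.
From mathcomp Require Import all_boot all_algebra.
From mathcomp Require Import freeg.

Set Implicit Arguments.
Unset Strict Implicit.
Unset Printing Implicit Defensive.

Import GRing.Theory.
Local Open Scope ring_scope.

Arguments gr : simpl never.

Section FreeModule.
Variables (K : choiceType) (M : lmodType int).

HB.instance Definition _ (f : K -> M) :=
  GRing.isZmodMorphism.Build {freeg K / int} M (fglift f) (lift_is_additive f).

Lemma fglift1 (f : K -> M) k : fglift f << k >> = f k.
Proof. by rewrite liftU scale1r. Qed.

Lemma freeg_morph_eq (V : zmodType) (F1 F2 : {freeg K / int} -> V) :
  zmod_morphism F1 -> zmod_morphism F2 ->
  (forall k, F1 << k >> = F2 << k >>) -> F1 =1 F2.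
Proof.
move=> F1B F2B eqF.
pose A1 : {additive _ -> V} := HB.pack F1 (GRing.isZmodMorphism.Build _ _ _ F1B).
pose A2 : {additive _ -> V} := HB.pack F2 (GRing.isZmodMorphism.Build _ _ _ F2B).
rewrite -[F1]/(A1 : _ -> _) -[F2]/(A2 : _ -> _).
elim/freeg_ind_dom0 => [|k x D _ _ IH]; first by rewrite !raddf0.
by rewrite !raddfD IH -[k]intz -freegU_mulz !raddfMz /= eqF.
Qed.

Lemma eq_fglift (f g : K -> M) : f =1 g -> fglift f =1 fglift g.
Proof.
move=> efg; apply: freeg_morph_eq => [x y|x y|k]; rewrite ?raddfB //.
by rewrite !fglift1.
Qed.

Lemma fglift_funB (f g : K -> M) D :
  fglift (fun k => f k - g k) D = fglift f D - fglift g D.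
Proof.
move: D; apply: freeg_morph_eq => [x y|x y|k] /=; first exact: raddfB.
  rewrite !(raddfB (fglift _)) -!addrA; congr (_ + _).
  by rewrite !opprB addrCA [RHS]addrCA [- _ - _]addrC.
by rewrite !fglift1.
Qed.

Lemma fglift_family_morph (U : zmodType) (F : K -> U -> M) D :
  (forall k, zmod_morphism (F k)) -> zmod_morphism (fun u => fglift (F^~ u) D).
Proof.
by move=> FB x y; rewrite -fglift_funB; apply: eq_fglift => k; apply: FB.
Qed.

End FreeModule.

Lemma zmod_morphism_linear_int (U V : lmodType int) (f : U -> V) :
  zmod_morphism f -> linear f.
Proof.
move=> fB; pose A : {additive U -> V} := HB.pack f (GRing.isZmodMorphism.Build _ _ _ fB).
by move=> c u v; rewrite -[f]/(A : _ -> _) raddfD -[c]intz !scaler_int raddfMz.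
Qed.

Lemma freeg_bimorph_eq (K1 K2 : choiceType) (V : zmodType)
    (F1 F2 : {freeg K1 / int} -> {freeg K2 / int} -> V) :
  (forall v, zmod_morphism (F1^~ v)) -> (forall u, zmod_morphism (F1 u)) ->
  (forall v, zmod_morphism (F2^~ v)) -> (forall u, zmod_morphism (F2 u)) ->
  (forall k1 k2, F1 << k1 >> << k2 >> = F2 << k1 >> << k2 >>) ->
  forall u v, F1 u v = F2 u v.
Proof.
move=> F1l F1r F2l F2r eqF u v; move: u; apply: freeg_morph_eq => // k1.
by move: v; apply: freeg_morph_eq.
Qed.

Section Group.
Variables (G : Type) (GG : group_on G).
Local Notation "x * y" := (gmul GG x y).
Local Notation "x ^-1" := (ginv GG x).
Local Notation "1" := (gone GG).

Lemma gmulrV x : x * x^-1 = 1.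
Proof.
rewrite -[x * _](gmul1 GG) -(gmulV GG (x^-1)) -gmulA (gmulA _ x^-1).
by rewrite gmulV gmul1.
Qed.

Lemma gmulr1 x : x * 1 = x.
Proof. by rewrite -(gmulV GG x) gmulA gmulrV gmul1. Qed.

End Group.

Section ModuleStructure.
Variables (n : nat) (G : choiceType) (GG : group_on G).
Local Notation gm := (gmul GG).
Local Notation P := (Pmod G n).
Local Notation PP := (PPmod G n).

Lemma act_bilinear (B : choiceType) : bilinear_for *:%R *:%R (act GG (B:=B)).
Proof.
split=> [u|r]; apply: zmod_morphism_linear_int; first by move=> ? ?; apply: raddfB.
by apply: fglift_family_morph => g ? ?; apply: raddfB.
Qed.

HB.instance Definition _ (B : choiceType) :=
  bilinear_isBilinear.Build int _ _ _ *:%R *:%R (act GG (B:=B)) (act_bilinear B).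

Lemma actPP_bilinear : bilinear_for *:%R *:%R (actPP (n:=n) GG).
Proof.
split=> [u|r]; apply: zmod_morphism_linear_int; first by move=> ? ?; apply: raddfB.
by apply: fglift_family_morph => g ? ?; apply: raddfB.
Qed.

HB.instance Definition _ :=
  bilinear_isBilinear.Build int _ _ _ *:%R *:%R (actPP (n:=n) GG) actPP_bilinear.

Lemma tens_bilinear : bilinear_for *:%R *:%R (tens (n:=n) (G:=G)).
Proof.
split=> [v|u]; apply: zmod_morphism_linear_int; first by move=> ? ?; apply: raddfB.
by apply: fglift_family_morph => k ? ?; apply: raddfB.
Qed.

HB.instance Definition _ :=
  bilinear_isBilinear.Build int _ _ _ *:%R *:%R (tens (n:=n) (G:=G)) tens_bilinear.

(* Instances of the bilinearity lemmas; unlike the generic ones, they leave no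
   structure projections in the goal, so long rewrite chains stay fast. *)
Section Specialized.
Variables (B : choiceType) (r r1 r2 : ZG G) (u u1 u2 : {freeg (G * B) / int}).
Lemma actDl : act GG (r1 + r2) u = act GG r1 u + act GG r2 u. Proof. exact: linearDl. Qed.
Lemma actBl : act GG (r1 - r2) u = act GG r1 u - act GG r2 u. Proof. exact: linearBl. Qed.
Lemma actNl : act GG (- r) u = - act GG r u. Proof. exact: linearNl. Qed.
Lemma act0l : act GG 0 u = 0. Proof. exact: linear0l. Qed.
Lemma actDr : act GG r (u1 + u2) = act GG r u1 + act GG r u2. Proof. exact: linearDr. Qed.
Lemma actBr : act GG r (u1 - u2) = act GG r u1 - act GG r u2. Proof. exact: linearBr. Qed.
Lemma actNr : act GG r (- u) = - act GG r u. Proof. exact: linearNr. Qed.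
Lemma act0r : act GG r 0 = 0 :> {freeg (G * B) / int}. Proof. exact: linear0r. Qed.
Lemma actZr (c : int) : act GG r (c *: u) = c *: act GG r u. Proof. exact: linearZr. Qed.
Lemma act_sumr (I : Type) (s : seq I) (Q : pred I) (F : I -> {freeg (G * B) / int}) :
  act GG r (\sum_(i <- s | Q i) F i) = \sum_(i <- s | Q i) act GG r (F i).
Proof. exact: linear_sumr. Qed.
End Specialized.

Section SpecializedPP.
Variables (r r1 r2 : ZG G) (u u1 u2 v v1 v2 : P) (w w1 w2 : PP).
Lemma actPPBl : actPP GG (r1 - r2) w = actPP GG r1 w - actPP GG r2 w. Proof. exact: linearBl. Qed.
Lemma actPPDr : actPP GG r (w1 + w2) = actPP GG r w1 + actPP GG r w2. Proof. exact: linearDr. Qed.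
Lemma actPPBr : actPP GG r (w1 - w2) = actPP GG r w1 - actPP GG r w2. Proof. exact: linearBr. Qed.
Lemma actPPNr : actPP GG r (- w) = - actPP GG r w. Proof. exact: linearNr. Qed.
Lemma actPP0r : actPP GG r 0 = 0 :> PP. Proof. exact: linear0r. Qed.
Lemma actPPZr (c : int) : actPP GG r (c *: w) = c *: actPP GG r w. Proof. exact: linearZr. Qed.
Lemma tensDl : tens (u1 + u2) v = tens u1 v + tens u2 v. Proof. exact: linearDl. Qed.
Lemma tensBl : tens (u1 - u2) v = tens u1 v - tens u2 v. Proof. exact: linearBl. Qed.
Lemma tensNl : tens (- u) v = - tens u v. Proof. exact: linearNl. Qed.
Lemma tens0l : tens 0 v = 0. Proof. exact: linear0l. Qed.
Lemma tensZl (c : int) : tens (c *: u) v = c *: tens u v. Proof. exact: linearZl. Qed.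
Lemma tensDr : tens u (v1 + v2) = tens u v1 + tens u v2. Proof. exact: linearDr. Qed.
Lemma tensBr : tens u (v1 - v2) = tens u v1 - tens u v2. Proof. exact: linearBr. Qed.
Lemma tensNr : tens u (- v) = - tens u v. Proof. exact: linearNr. Qed.
Lemma tens0r : tens u 0 = 0. Proof. exact: linear0r. Qed.
End SpecializedPP.

Lemma act_basis (B : choiceType) g h (c : B) :
  act GG (gr g) << (h, c) >> = << (gm g h, c) >>.
Proof. by rewrite /act /gr !fglift1. Qed.

Lemma actPP_basis g (k1 k2 : G * cell n) :
  actPP GG (gr g) << (k1, k2) >> = << ((gm g k1.1, k1.2), (gm g k2.1, k2.2)) >> :> PP.
Proof. by rewrite /actPP /gr !fglift1. Qed.

Lemma tens_basis (k1 k2 : G * cell n) : tens << k1 >> << k2 >> = << (k1, k2) >>.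
Proof. by rewrite /tens !fglift1. Qed.

Lemma act_comp (B : choiceType) g h (u : {freeg (G * B) / int}) :
  act GG (gr g) (act GG (gr h) u) = act GG (gr (gm g h)) u.
Proof.
move: u; apply: freeg_morph_eq => [? ?|? ?|[k c]]; rewrite ?actBr //.
by rewrite !act_basis gmulA.
Qed.

Lemma act1 (B : choiceType) (u : {freeg (G * B) / int}) : act GG (gr (gone GG)) u = u.
Proof.
move: u; apply: freeg_morph_eq => [? ?|? ?|[k c]]; rewrite ?actBr //.
by rewrite act_basis gmul1.
Qed.

Lemma act_lmul (B : choiceType) h r (u : {freeg (G * B) / int}) :
  act GG (lmulZG GG h r) u = act GG (gr h) (act GG r u).
Proof.
move: r; apply: freeg_morph_eq => [? ?|? ?|g]; rewrite /lmulZG ?raddfB ?actBl ?actBr //.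
by rewrite fglift1 act_comp.
Qed.

Lemma actPP_comp g h (v : PP) :
  actPP GG (gr g) (actPP GG (gr h) v) = actPP GG (gr (gm g h)) v.
Proof.
move: v; apply: freeg_morph_eq => [? ?|? ?|[k1 k2]]; rewrite ?actPPBr //.
by rewrite !actPP_basis !gmulA.
Qed.

Lemma actPP1 (v : PP) : actPP GG (gr (gone GG)) v = v.
Proof.
move: v; apply: freeg_morph_eq => [? ?|? ?|[[h1 c1] [h2 c2]]]; rewrite ?actPPBr //.
by rewrite actPP_basis !gmul1.
Qed.

Lemma actPP_tens g (u v : P) :
  actPP GG (gr g) (tens u v) = tens (act GG (gr g) u) (act GG (gr g) v).
Proof.
move: u v; apply: freeg_bimorph_eq => [? ? ?|? ? ?|? ? ?|? ? ?|[h1 c1] [h2 c2]] /=;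
  rewrite ?(tensBl, tensBr, actBr, actPPBr) //.
by rewrite !act_basis !tens_basis actPP_basis.
Qed.

End ModuleStructure.

Section Support.
Variable K : choiceType.
Implicit Types (Q : pred K) (D : {freeg K / int}).

Definition supported Q D := all Q (dom D).

Lemma supportedP Q D : reflect {in dom D, forall k, Q k} (supported Q D).
Proof. exact: allP. Qed.

Lemma supported0 Q : supported Q 0.
Proof. by rewrite /supported dom0. Qed.

Lemma supportedU Q k : Q k -> supported Q << k >>.
Proof. by rewrite /supported domU1 /= andbT. Qed.

Lemma supportedD Q D1 D2 : supported Q D1 -> supported Q D2 -> supported Q (D1 + D2).
Proof.
move=> /supportedP s1 /supportedP s2; apply/supportedP => k /domD_subset.
by rewrite mem_cat => /orP[]; [apply: s1 | apply: s2].
Qed.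

Lemma supportedN Q D : supported Q D -> supported Q (- D).
Proof. by move=> /supportedP sD; apply/supportedP => k; rewrite domN; apply: sD. Qed.

Lemma supportedZ Q (c : int) D : supported Q D -> supported Q (c *: D).
Proof. by move=> /supportedP sD; apply/supportedP => k /domZ_subset; apply: sD. Qed.

Lemma supported_sum Q (I : Type) (r : seq I) (P : pred I) (F : I -> {freeg K / int}) :
  (forall i, P i -> supported Q (F i)) -> supported Q (\sum_(i <- r | P i) F i).
Proof.
by move=> sF; apply: (big_ind (supported Q)) => //; [apply: supported0 | apply: supportedD].
Qed.

Lemma supported_sub Q1 Q2 D : (forall k, Q1 k -> Q2 k) -> supported Q1 D -> supported Q2 D.
Proof. by move=> sQ /supportedP sD; apply/supportedP => k /sD /sQ. Qed.

End Support.

Lemma supported_fglift (K K' : choiceType) (Q' : pred K') (f : K -> {freeg K' / int})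
    (D : {freeg K / int}) :
  {in dom D, forall k, supported Q' (f k)} -> supported Q' (fglift f D).
Proof.
move=> sf; rewrite -(freeg_sumE D) raddf_sum /= big_seq; apply: supported_sum => k kD.
by rewrite liftU; apply/supportedZ/sf.
Qed.

Section GradedSupport.
Variables (n : nat) (G : choiceType) (GG : group_on G).
Local Notation P := (Pmod G n).
Local Notation PP := (PPmod G n).

Lemma homogP_act m (r : ZG G) (u : P) : homogP m u -> homogP m (act GG r u).
Proof.
move=> /supportedP hu; apply: supported_fglift => g _.
by apply: supported_fglift => k /hu hk; apply: supportedU.
Qed.

Lemma homogPP_actPP m (r : ZG G) (v : PP) : homogPP m v -> homogPP m (actPP GG r v).
Proof.
move=> /supportedP hv; apply: supported_fglift => g _.
by apply: supported_fglift => k /hv hk; apply: supportedU.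
Qed.

Definition bideg (r s : nat) (k : (G * cell n) * (G * cell n)) :=
  (cdeg k.1.2 == r) && (cdeg k.2.2 == s).

Lemma supported_tens r s (u v : P) :
  homogP r u -> homogP s v -> supported (bideg r s) (tens u v).
Proof.
move=> /supportedP hu /supportedP hv; apply: supported_fglift => k1 /hu hk1.
by apply: supported_fglift => k2 /hv hk2; apply: supportedU; rewrite /bideg /= hk1.
Qed.

Lemma homogPP_bideg r s (v : PP) : supported (bideg r s) v -> homogPP (r + s) v.
Proof. by apply: supported_sub => k /andP[/eqP -> /eqP ->]. Qed.

Lemma projPP_is_zmod_morphism r s : zmod_morphism (projPP (n:=n) (G:=G) r s).
Proof.
move=> v1 v2; apply/eqP/freeg_eqP => k.
by rewrite coeffB /projPP !fgmap_f0_coeffE // coeffB mulrnBl.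
Qed.

HB.instance Definition _ r s :=
  GRing.isZmodMorphism.Build PP PP (projPP r s) (projPP_is_zmod_morphism r s).

Lemma projPPD r s (v1 v2 : PP) : projPP r s (v1 + v2) = projPP r s v1 + projPP r s v2.
Proof. exact: raddfD. Qed.

Lemma projPP_id r s (v : PP) : supported (bideg r s) v -> projPP r s v = v.
Proof.
move=> /supportedP sv; apply/eqP/freeg_eqP => k; rewrite /projPP fgmap_f0_coeffE //.
have [kv|kNv] := boolP (k \in dom v); last by rewrite coeff_outdom ?mul0rn.
by move: (sv k kv); rewrite /bideg /= => ->; rewrite mulr1n.
Qed.

Lemma projPP_eq0 r s r' s' (v : PP) :
  supported (bideg r' s') v -> (r, s) != (r', s') -> projPP r s v = 0.
Proof.
move=> /supportedP sv rs_neq; apply/eqP/freeg_eqP => k.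
rewrite /projPP fgmap_f0_coeffE // coeff0.
have [kv|kNv] := boolP (k \in dom v); last by rewrite coeff_outdom ?mul0rn.
have /andP[/eqP k1 /eqP k2] := sv k kv.
by rewrite /= k1 k2 -xpair_eqE eq_sym (negbTE rs_neq) mulr0n.
Qed.

Lemma projPP_deg2 (v20 v11 v02 : PP) :
  supported (bideg 2 0) v20 -> supported (bideg 1 1) v11 -> supported (bideg 0 2) v02 ->
  projPP 1 1 (v20 + v11 + v02) = v11 /\ projPP 0 2 (v20 + v11 + v02) = v02.
Proof.
move=> s20 s11 s02; rewrite !projPPD; split.
  by rewrite (projPP_eq0 s20) // (projPP_eq0 s02) // (projPP_id s11) add0r addr0.
by rewrite (projPP_eq0 s20) // (projPP_eq0 s11) // (projPP_id s02) !add0r.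
Qed.

Lemma epsP_is_zmod_morphism : zmod_morphism (epsP (n:=n) (G:=G)).
Proof. by move=> u1 u2; rewrite /epsP raddfB. Qed.

HB.instance Definition _ := GRing.isZmodMorphism.Build P int (epsP (n:=n) (G:=G)) epsP_is_zmod_morphism.

Lemma epsPP_is_zmod_morphism : zmod_morphism (epsPP (n:=n) (G:=G)).
Proof. by move=> v1 v2; rewrite /epsPP raddfB. Qed.

HB.instance Definition _ := GRing.isZmodMorphism.Build PP int (epsPP (n:=n) (G:=G)) epsPP_is_zmod_morphism.

Lemma epsPP_homog m (v : PP) : (0 < m)%N -> homogPP m v -> epsPP v = 0.
Proof.
move=> m_gt0 /supportedP sv; rewrite /epsPP -(freeg_sumE v) raddf_sum /= big_seq.
apply: big1 => -[[g1 c1] [g2 c2]] /sv /= /eqP m_eq; rewrite liftU /=.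
suff -> : (c1 == cX n) && (c2 == cX n) = false by rewrite scaler0.
by apply: contraTF m_gt0 => /andP[/eqP c1x /eqP c2x]; rewrite -m_eq c1x c2x.
Qed.

End GradedSupport.

Section Complex.
Variables (n : nat) (G : choiceType) (GG : group_on G) (t : gen n -> G).
Local Notation gm := (gmul GG).
Local Notation P := (Pmod G n).
Local Notation PP := (PPmod G n).
Local Notation dP := (dP GG t).
Local Notation dPP := (dPP GG t).

HB.instance Definition _ := GRing.isZmodMorphism.Build P P dP (raddfB (fglift _)).
HB.instance Definition _ := GRing.isZmodMorphism.Build PP PP dPP (raddfB (fglift _)).

Lemma dP_basis k : dP << k >> = dbase GG t k.
Proof. exact: fglift1. Qed.

Definition gen_cell (s : gen n) : cell n := inl (inr s).

Lemma dP_x g : dP << (g, cX n) >> = 0.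
Proof. exact: dP_basis. Qed.

Lemma dP_gen_cell (g : G) (s : gen n) :
  dP << (g, gen_cell s) >> = << (gm g (t s), cX n) >> - << (g, cX n) >>.
Proof. by case: s => i; rewrite dP_basis. Qed.

Lemma dP_act g (u : P) : dP (act GG (gr g) u) = act GG (gr g) (dP u).
Proof.
move: u; apply: freeg_morph_eq => [? ?|? ?|[h [[[]|s]|[]]]];
  rewrite ?(actBr, raddfB) //= act_basis.
- by rewrite !dP_x act0r.
- by rewrite !dP_gen_cell actBr !act_basis gmulA.
- by rewrite !dP_basis /dbase /= act_comp.
Qed.

Definition twist (u : P) : P := fglift (fun k => ((-1) ^+ cdeg k.2) *: << k >>) u.

HB.instance Definition _ := GRing.isZmodMorphism.Build P P twist (raddfB (fglift _)).

Lemma twist_basis k : twist << k >> = ((-1) ^+ cdeg k.2) *: << k >>.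
Proof. exact: fglift1. Qed.

Lemma twist_x g : twist << (g, cX n) >> = << (g, cX n) >>.
Proof. by rewrite twist_basis scale1r. Qed.

Lemma twist_gen_cell (g : G) (s : gen n) :
  twist << (g, gen_cell s) >> = - << (g, gen_cell s) >>.
Proof. by rewrite twist_basis expr1 scaleN1r. Qed.

Lemma twist_act g (u : P) : twist (act GG (gr g) u) = act GG (gr g) (twist u).
Proof.
move: u; apply: freeg_morph_eq => [? ?|? ?|[h c]]; rewrite ?(actBr, raddfB) //.
by rewrite act_basis !twist_basis actZr act_basis.
Qed.

Lemma dPP_tens (u v : P) : dPP (tens u v) = tens (dP u) v + tens (twist u) (dP v).
Proof.
move: u v; apply: freeg_bimorph_eq => [? ? ?|? ? ?|? ? ?|? ? ?|k1 k2] /=.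
- by rewrite tensBl raddfB.
- by rewrite tensBr raddfB.
- by rewrite !raddfB !tensBl addrACA opprD.
- by rewrite !raddfB !tensBr addrACA opprD.
by rewrite tens_basis /dPP fglift1 twist_basis tensZl.
Qed.

Lemma dPP_actPP g (v : PP) : dPP (actPP GG (gr g) v) = actPP GG (gr g) (dPP v).
Proof.
move: v; apply: freeg_morph_eq => [? ?|? ?|[[h1 c1] [h2 c2]]]; rewrite ?(actPPBr, raddfB) //.
rewrite actPP_basis /dPP !fglift1 /= actPPDr actPPZr !actPP_tens -!dP_act.
by rewrite !act_basis.
Qed.

End Complex.

Ltac bring_to_front t e :=
  lazymatch e with
  | ?y + ?r => tryif unify y t then idtac else
       (bring_to_front t r; first [rewrite (addrCA y t) | rewrite (addrC y t)])
  | ?y => unify y t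
  end.

(* Proves an equation between signed sums in a zmodType by moving everything
   to the left and cancelling each summand against its opposite. *)
Ltac cancel_sums :=
  apply/eqP; rewrite -subr_eq0; apply/eqP;
  rewrite ?opprD ?opprK ?oppr0 -?addrA ?addr0 ?add0r;
  repeat match goal with
  | |- - ?x + ?r = 0 => bring_to_front x r; first [rewrite addKr | rewrite addNr]
  | |- ?x + ?r = 0 => bring_to_front (- x) r; first [rewrite addNKr | rewrite subrr]
  end; try done.

Ltac expand := rewrite ?(actDl, actBl, actNl, act0l, actDr, actBr, actNr, act0r,
  actPPDr, actPPBr, actPPNr, actPP0r, tensDl, tensBl, tensNl, tens0l,
  tensDr, tensBr, tensNr, tens0r, act_comp, act_basis, actPP_tens, tens_basis,
  addr0, add0r, oppr0).

(** * Fox chains of words *)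

Section Words.
Variables (n : nat) (G : choiceType) (GG : group_on G) (t : gen n -> G).
Local Notation gm := (gmul GG).
Local Notation gi := (ginv GG).
Local Notation g1 := (gone GG).
Local Notation P := (Pmod G n).
Local Notation PP := (PPmod G n).
Local Notation dP := (dP GG t).
Local Notation ev := (eval_word GG t).
Local Notation lv := (letter_val GG t).
Local Notation x0 := (xg n GG).

Definition letter_chain (l : gen n * bool) : P :=
  if l.2 then - << (gi (t l.1), gen_cell l.1) >> else << (g1, gen_cell l.1) >>.

Fixpoint word_chain (u : word n) : P :=
  if u is l :: u' then letter_chain l + act GG (gr (lv l)) (word_chain u') else 0.

Definition letter_diag (l : gen n * bool) : PP :=
  if l.2 then tens (letter_chain l) (letter_chain l) else 0.

Fixpoint word_diag (u : word n) : PP :=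
  if u is l :: u' then
    letter_diag l + tens (letter_chain l) (act GG (gr (lv l)) (word_chain u'))
    + actPP GG (gr (lv l)) (word_diag u')
  else 0.

Lemma eval_word_cat u v : ev (u ++ v) = gm (ev u) (ev v).
Proof. by elim: u => [|l u IH] /=; rewrite ?gmul1 // IH gmulA. Qed.

Lemma word_chain_cat u v :
  word_chain (u ++ v) = word_chain u + act GG (gr (ev u)) (word_chain v).
Proof.
elim: u => [|l u IH] /=; first by rewrite act1 add0r.
by rewrite IH actDr act_comp addrA.
Qed.

Lemma word_diag_cat u v : word_diag (u ++ v) =
  word_diag u + tens (word_chain u) (act GG (gr (ev u)) (word_chain v))
  + actPP GG (gr (ev u)) (word_diag v).
Proof.
elim: u => [|l u IH] /=; first by rewrite tens0l actPP1 !add0r.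
rewrite IH word_chain_cat; expand; rewrite !actPP_comp; cancel_sums.
Qed.

Lemma fox_word_chain u :
  \sum_(i < n) (act GG (fox GG t (inl i) u) (yg GG i) + act GG (fox GG t (inr i) u) (zg GG i))
  = word_chain u.
Proof.
elim: u => [|[s e] u IH] /=; first by rewrite big1 // => i _; rewrite !act0l addr0.
rewrite -IH; under eq_bigr => i _ do rewrite /= !actDl !act_lmul addrACA.
rewrite big_split /=; congr (_ + _); last by rewrite act_sumr; apply: eq_bigr => i _; rewrite actDr.
case: s => i0 /=; rewrite (bigD1 i0) //= big1 => [|j ji0];
  try by rewrite ?(inj_eq inl_inj) ?(inj_eq inr_inj) eq_sym (negbTE ji0) !act0l addr0.
all: by case: e; rewrite /letter_chain /= ?eqxx ?act0l ?addr0 ?add0r ?actNl ?act1 ?act_basis ?gmulr1.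
Qed.

Lemma dP_w : dP (wg n GG) = word_chain (relator n).
Proof. by rewrite dP_basis /dbase /= act1 fox_word_chain. Qed.

Lemma dP_letter_chain l : dP (letter_chain l) = << (lv l, cX n) >> - x0.
Proof.
by case: l => s []; rewrite /letter_chain /letter_val /= ?raddfN /= dP_gen_cell
  ?gmulV ?gmul1 ?opprB.
Qed.

Lemma twist_letter_chain l : twist (letter_chain l) = - letter_chain l.
Proof. by case: l => s []; rewrite /letter_chain /= ?raddfN /= twist_gen_cell. Qed.

Lemma dP_word_chain u : dP (word_chain u) = << (ev u, cX n) >> - x0.
Proof.
elim: u => [|l u IH] /=; first by rewrite raddf0 subrr.
rewrite raddfD /= dP_act IH dP_letter_chain actBr !act_basis gmulr1.
by rewrite addrC addrA subrK.
Qed.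

Lemma twist_word_chain u : twist (word_chain u) = - word_chain u.
Proof.
elim: u => [|l u IH] /=; first by rewrite raddf0 oppr0.
by rewrite raddfD /= twist_act IH twist_letter_chain actNr opprD.
Qed.

End Words.

(** * Diagonals extending the standard one on the 1-skeleton *)

Section Diagonal.
Variables (n : nat) (G : choiceType) (GG : group_on G) (t : gen n -> G).
Local Notation gm := (gmul GG).
Local Notation g1 := (gone GG).
Local Notation P := (Pmod G n).
Local Notation PP := (PPmod G n).
Local Notation dP := (dP GG t).
Local Notation dPP := (dPP GG t).
Local Notation ev := (eval_word GG t).
Local Notation lv := (letter_val GG t).
Local Notation x0 := (xg n GG).
Local Notation e s := (<< (g1, gen_cell s) >> : P).

Variable Dw : PP.

Definition diag_cell (c : cell n) : PP :=
  match c with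
  | inl (inl _) => tens x0 x0
  | inl (inr s) => tens (e s) (act GG (gr (t s)) x0) + tens x0 (e s)
  | inr _ => Dw
  end.

Definition diag (u : P) : PP := fglift (fun k => actPP GG (gr k.1) (diag_cell k.2)) u.

HB.instance Definition _ := GRing.isZmodMorphism.Build P PP diag (raddfB (fglift _)).

Lemma diag_basis g c : diag << (g, c) >> = actPP GG (gr g) (diag_cell c).
Proof. exact: fglift1. Qed.

Lemma diag_cellE c : diag << (g1, c) >> = diag_cell c.
Proof. by rewrite diag_basis actPP1. Qed.

Lemma diag_act (r : ZG G) (u : P) : diag (act GG r u) = actPP GG r (diag u).
Proof.
move: r; apply: freeg_morph_eq => [? ?|? ?|g]; rewrite ?(actBl, actPPBl, raddfB) //.
move: u; apply: freeg_morph_eq => [? ?|? ?|[h c]]; rewrite ?(actBr, raddfB) /= ?actPPBr //.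
by rewrite act_basis !diag_basis actPP_comp.
Qed.

Lemma diag_gen_cell g s : diag << (g, gen_cell s) >> =
  tens << (g, gen_cell s) >> << (gm g (t s), cX n) >> + tens << (g, cX n) >> << (g, gen_cell s) >>.
Proof. by rewrite diag_basis /= actPPDr !actPP_tens !act_comp !act_basis !gmulr1. Qed.

Lemma diag_x g : diag << (g, cX n) >> = tens << (g, cX n) >> << (g, cX n) >>.
Proof. by rewrite diag_basis /= actPP_tens !act_basis gmulr1. Qed.

Lemma dPP_diag_cell c : (cdeg c <= 1)%N -> dPP (diag_cell c) = diag (dP << (g1, c) >>).
Proof.
case: c => [[[]|s]|[]] //= _.
  by rewrite dPP_tens dP_x tens0l tens0r addr0 raddf0.
rewrite raddfD /= !dPP_tens act_basis gmulr1 !dP_gen_cell !dP_x twist_x raddfB /= !diag_x.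
by expand; rewrite !gmul1; cancel_sums.
Qed.

Lemma epsPP_actPP g (v : PP) : epsPP (actPP GG (gr g) v) = epsPP v.
Proof.
move: v; apply: freeg_morph_eq => [? ?|? ?|[[h1 c1] [h2 c2]]]; rewrite ?(actPPBr, raddfB) //.
by rewrite actPP_basis /epsPP !fglift1.
Qed.

Section Approximation.
Hypothesis Dw_homog : homogPP 2 Dw.
Hypothesis dPP_Dw : dPP Dw = diag (dP (wg n GG)).

Lemma diag_homog m u : homogP m u -> homogPP m (diag u).
Proof.
move=> /supportedP hu; apply: supported_fglift => -[g c] /hu /eqP <-.
apply: homogPP_actPP; case: c => [[[]|s]|[]] //=.
  by apply/(homogPP_bideg (r := 0) (s := 0))/supported_tens; apply: supportedU.
apply: supportedD.
  apply/(homogPP_bideg (r := 1) (s := 0))/supported_tens; first exact: supportedU.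
  by apply: homogP_act; apply: supportedU.
by apply/(homogPP_bideg (r := 0) (s := 1))/supported_tens; apply: supportedU.
Qed.

Lemma diag_chain u : dPP (diag u) = diag (dP u).
Proof.
move: u; apply: freeg_morph_eq => [? ?|? ?|[g c]]; rewrite ?raddfB /= ?raddfB //.
have -> : << (g, c) >> = act GG (gr g) << (g1, c) >> :> P by rewrite act_basis gmulr1.
rewrite diag_act dP_act diag_act dPP_actPP diag_cellE; congr actPP.
by case: c => [[[]|s]|[]]; [apply: dPP_diag_cell..|apply: dPP_Dw].
Qed.

Lemma epsPP_diag u : epsPP (diag u) = epsP u.
Proof.
move: u; apply: freeg_morph_eq => [? ?|? ?|[g c]]; rewrite ?raddfB /= ?raddfB //.
rewrite diag_basis epsPP_actPP /epsP fglift1 -diag_cellE.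
case: c => [[[]|s]|[]]; first by rewrite diag_x tens_basis /epsPP fglift1.
  by rewrite (@epsPP_homog _ _ 1) //; apply/diag_homog/supportedU.
by rewrite (@epsPP_homog _ _ 2) //; apply/diag_homog/supportedU.
Qed.

Lemma diag_approx : is_diag_approx GG t diag.
Proof.
split; [exact: raddfD | exact: diag_act | exact: diag_homog | exact: diag_chain |].
by move=> u _; apply: epsPP_diag.
Qed.

End Approximation.

Lemma dPP_letter_diag l : dPP (letter_diag GG t l) =
  diag (letter_chain GG t l) - tens x0 (letter_chain GG t l)
  - tens (letter_chain GG t l) << (lv l, cX n) >>.
Proof.
case: l => s []; rewrite /letter_diag /letter_chain /letter_val /=.
- rewrite tensNl tensNr opprK raddfN /= dPP_tens twist_gen_cell dP_gen_cell.
  by rewrite diag_gen_cell gmulV; expand; cancel_sums.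
- by rewrite raddf0 diag_gen_cell !gmul1; cancel_sums.
Qed.

Lemma dPP_word_diag u : dPP (word_diag GG t u) =
  diag (word_chain GG t u) - tens x0 (word_chain GG t u)
  - tens (word_chain GG t u) << (ev u, cX n) >>.
Proof.
elim: u => [|l u IH] /=; first by rewrite !raddf0 tens0r tens0l !subr0.
rewrite !raddfD /= dPP_actPP IH dPP_tens dP_act dP_word_chain twist_letter_chain.
rewrite dP_letter_chain dPP_letter_diag diag_act.
expand; rewrite !gmulr1; cancel_sums.
Qed.

End Diagonal.

(** * The relator *)

Section Prefixes.
Variables (n : nat) (G : choiceType) (GG : group_on G) (t : gen n -> G).
Local Notation gm := (gmul GG).
Local Notation gi := (ginv GG).
Local Notation a i := (t (inl i)).
Local Notation b i := (t (inr i)).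
Local Notation P := (Pmod G n).
Local Notation PP := (PPmod G n).
Local Notation pre := (pre GG t).
Local Notation Aj := (Aj GG t).
Local Notation Bj := (Bj GG t).
Local Notation Tj := (Tj GG t).
Local Notation cabi := (cabi GG t).
Local Notation word_chain := (word_chain GG t).
Local Notation word_diag := (word_diag GG t).

Lemma prefix_word0 : prefix_word n 0 = [::].
Proof. by rewrite /prefix_word take0. Qed.

Lemma prefix_wordS (i : 'I_n) : prefix_word n i.+1 = prefix_word n i ++ Defs.pblock i.
Proof.
rewrite /prefix_word (take_nth i) ?size_enum_ord // nth_ord_enum.
by rewrite map_rcons flatten_rcons.
Qed.

Lemma relator_prefix : relator n = prefix_word n n.
Proof. by rewrite /prefix_word take_oversize ?size_enum_ord. Qed.

Lemma preS (i : 'I_n) : pre i.+1 = gm (gm (gm (gm (pre i) (a i)) (b i)) (gi (a i))) (gi (b i)).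
Proof.
by rewrite /Defs.pre prefix_wordS eval_word_cat /= /letter_val /= gmulr1 !gmulA.
Qed.

Definition prefix_chain (k : nat) : P := \sum_(j < n | (j < k)%N) (Aj j + Bj j).

Lemma prefix_chain0 : prefix_chain 0 = 0.
Proof. by rewrite /prefix_chain big_pred0. Qed.

Lemma ltnS_ord (i j : 'I_n) : ((j < i.+1)%N && (j != i)) = (j < i)%N.
Proof. by rewrite -(inj_eq val_inj) /= ltnS leq_eqVlt; case: ltngtP. Qed.

Lemma prefix_chainS (i : 'I_n) : prefix_chain i.+1 = prefix_chain i + (Aj i + Bj i).
Proof.
rewrite /prefix_chain (bigD1 i) ?ltnSn //= addrC; congr (_ + _).
by apply: eq_bigl => j; rewrite ltnS_ord.
Qed.

Lemma block_chain (i : 'I_n) :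
  act GG (gr (pre i)) (word_chain (Defs.pblock i)) = Aj i + Bj i.
Proof.
rewrite /Defs.Aj /Defs.Bj /= /letter_chain /letter_val /yg /zg /=.
by expand; rewrite ?gmulr1 ?gmulA; cancel_sums.
Qed.

Lemma prefix_word_chain (k : nat) : (k <= n)%N -> word_chain (prefix_word n k) = prefix_chain k.
Proof.
elim: k => [|k IH] ltkn; first by rewrite prefix_word0 prefix_chain0.
rewrite -[k]/(nat_of_ord (Ordinal ltkn)) prefix_wordS word_chain_cat prefix_chainS.
by rewrite IH ?(ltnW ltkn) // -block_chain.
Qed.

Lemma sum_Tj (k : nat) (v : P) :
  \sum_(j < n | (j < k)%N) Tj j v = tens (prefix_chain k) v.
Proof. by rewrite /prefix_chain linear_sumlz /=; apply: eq_bigr => j _; rewrite tensDl. Qed.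

Definition block_diag (j : 'I_n) : PP :=
  tens (prefix_chain j) (act GG (gr (pre j)) (word_chain (Defs.pblock j)))
  + actPP GG (gr (pre j)) (word_diag (Defs.pblock j)).

Lemma prefix_word_diag (k : nat) :
  (k <= n)%N -> word_diag (prefix_word n k) = \sum_(j < n | (j < k)%N) block_diag j.
Proof.
elim: k => [|k IH] ltkn; first by rewrite prefix_word0 big_pred0.
rewrite -[k]/(nat_of_ord (Ordinal ltkn)) prefix_wordS word_diag_cat IH ?(ltnW ltkn) //.
rewrite prefix_word_chain ?(ltnW ltkn) //.
rewrite [RHS](bigD1 (Ordinal ltkn)) ?ltnSn //= [RHS]addrC -addrA; congr (_ + _).
by apply: eq_bigl => j; rewrite (ltnS_ord (Ordinal ltkn)).
Qed.

Definition term_a (i : 'I_n) : PP := tens (prefix_chain i) (act GG (gr (pre i)) (yg GG i)).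
Definition term_b (i : 'I_n) : PP :=
  tens (prefix_chain i) (act GG (gr (gm (pre i) (a i))) (zg GG i))
  + tens (act GG (gr (pre i)) (yg GG i)) (act GG (gr (gm (pre i) (a i))) (zg GG i)).
Definition term_ainv (i : 'I_n) : PP :=
  tens (prefix_chain i) (act GG (gr (cabi i)) (yg GG i))
  + tens (Aj i) (act GG (gr (cabi i)) (yg GG i))
  + tens (act GG (gr (gm (pre i) (a i))) (zg GG i)) (act GG (gr (cabi i)) (yg GG i)).
Definition term_binv (i : 'I_n) : PP :=
  tens (prefix_chain i.+1) (act GG (gr (pre i.+1)) (zg GG i)).

Lemma block_diagE (j : 'I_n) :
  block_diag j = term_a j + term_b j - term_ainv j - term_binv j.
Proof.
rewrite /block_diag /term_a /term_b /term_ainv /term_binv prefix_chainS preS.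
rewrite /Defs.cabi /Defs.Aj /Defs.Bj /= /letter_diag /letter_chain /letter_val /= /yg /zg.
by expand; rewrite ?gmulr1 ?gmulA; cancel_sums.
Qed.

End Prefixes.

Lemma sum_ord_but_last (V : zmodType) m (F : 'I_m.+1 -> V) :
  \sum_(i < m.+1 | (i.+1 < m.+1)%N) F i = \sum_(i < m.+1) F i - F ord_max.
Proof.
rewrite [in RHS](bigD1 ord_max) //= addrC addrK; apply: eq_bigl => i.
by rewrite -(inj_eq val_inj) /= ltnS ltn_neqAle -ltnS ltn_ord andbT.
Qed.

Lemma sum_ord_last (V : zmodType) m (F : 'I_m.+1 -> V) :
  \sum_(i < m.+1 | i.+1 == m.+1) F i = F ord_max.
Proof. by rewrite (big_pred1 ord_max) // => i; rewrite /= eqSS -(inj_eq val_inj). Qed.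

Section SurfaceGroup.
Variables (m : nat) (G : choiceType) (GG : group_on G) (t : gen m.+1 -> G).
Local Notation n := m.+1.
Local Notation gm := (gmul GG).
Local Notation gi := (ginv GG).
Local Notation g1 := (gone GG).
Local Notation a i := (t (inl i)).
Local Notation b i := (t (inr i)).
Local Notation P := (Pmod G n).
Local Notation PP := (PPmod G n).
Local Notation dP := (dP GG t).
Local Notation dPP := (dPP GG t).
Local Notation x0 := (xg n GG).
Local Notation w0 := (wg n GG).
Local Notation pre := (pre GG t).
Local Notation last := (@ord_max m).
Local Notation word_chain := (word_chain GG t).
Local Notation word_diag := (word_diag GG t).
Local Notation diag := (diag GG t).

Hypothesis relator1 : eval_word GG t (relator n) = g1.

Lemma pre_last : pre last.+1 = g1.
Proof. by rewrite /Defs.pre /= -relator_prefix. Qed.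

Lemma cabi_last : cabi GG t last = b last.
Proof.
have: gm (cabi GG t last) (gi (b last)) = g1 by rewrite /Defs.cabi -preS pre_last.
by move/(congr1 (gm^~ (b last))); rewrite -gmulA gmulV gmulr1 gmul1.
Qed.

Lemma relator_chain : word_chain (relator n) = prefix_chain GG t n.
Proof. by rewrite relator_prefix prefix_word_chain. Qed.

Lemma relator_cycle : dP (word_chain (relator n)) = 0.
Proof. by rewrite dP_word_chain relator1 subrr. Qed.

Definition last_cell : P := act GG (gr (b last)) (yg GG last) + zg GG last.

Lemma last_terms : term_ainv GG t last + term_binv GG t last
  - tens (zg GG last) (act GG (gr (b last)) (yg GG last))
  = tens (prefix_chain GG t n) last_cell.
Proof.
rewrite /term_ainv /term_binv /last_cell cabi_last (prefix_chainS _ _ last) pre_last.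
rewrite /Defs.Bj -preS pre_last act1 /Defs.Aj /yg /zg.
by expand; rewrite ?gmulr1 ?gmul1; cancel_sums.
Qed.

Lemma Delta11_formulaE :
  Delta11_formula GG t = word_diag (relator n) + tens (prefix_chain GG t n) last_cell.
Proof.
have sum_Tj_le k v : \sum_(j < n | (j <= k)%N) Tj GG t j v = tens (prefix_chain GG t k.+1) v.
  by rewrite -sum_Tj; apply: eq_bigl => j; rewrite ltnS.
rewrite -last_terms relator_prefix prefix_word_diag // big_mkcond /=.
under eq_bigr => j _ do rewrite ltn_ord block_diagE.
rewrite !sumrB big_split /= /Delta11_formula sum_ord_last.
have -> : \sum_(i < n) \sum_(j < n | (j < i)%N) Tj GG t j (act GG (gr (pre i)) (yg GG i))
    = \sum_(i < n) term_a GG t i.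
  by apply: eq_bigr => i _; rewrite sum_Tj.
have -> : \sum_(i < n | (i.+1 < n)%N)
      ((\sum_(j < n | (j < i)%N) Tj GG t j (act GG (gr (cabi GG t i)) (yg GG i)))
       + tens (Aj GG t i) (act GG (gr (cabi GG t i)) (yg GG i))
       + tens (act GG (gr (gm (pre i) (a i))) (zg GG i)) (act GG (gr (cabi GG t i)) (yg GG i)))
    = \sum_(i < n) term_ainv GG t i - term_ainv GG t last.
  by rewrite -sum_ord_but_last; apply: eq_bigr => i _; rewrite sum_Tj.
have -> : \sum_(i < n)
      ((\sum_(j < n | (j < i)%N) Tj GG t j (act GG (gr (gm (pre i) (a i))) (zg GG i)))
       + tens (act GG (gr (pre i)) (yg GG i)) (act GG (gr (gm (pre i) (a i))) (zg GG i)))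
    = \sum_(i < n) term_b GG t i.
  by apply: eq_bigr => i _; rewrite sum_Tj.
have -> : \sum_(i < n | (i.+1 < n)%N)
      \sum_(j < n | (j <= i)%N) Tj GG t j (act GG (gr (pre i.+1)) (zg GG i))
    = \sum_(i < n) term_binv GG t i - term_binv GG t last.
  by rewrite -sum_ord_but_last; apply: eq_bigr => i _; rewrite sum_Tj_le.
by cancel_sums.
Qed.

(* As the Fox chain C(p) of the relator is a cycle, the boundary of
   C(p) (x) last_cell is - C(p) (x) (b_n a_n - 1) x; the summand
   w (x) b_n a_n x compensates for it. *)
Definition diag_w : PP :=
  tens w0 << (gm (b last) (a last), cX n) >> + Delta11_formula GG t + tens x0 w0.

Lemma dP_last_cell : dP last_cell = << (gm (b last) (a last), cX n) >> - x0.
Proof.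
rewrite raddfD /= dP_act !dP_gen_cell actBr !act_basis !gmul1 gmulr1.
by rewrite addrA subrK.
Qed.

Lemma dPP_diag_w : dPP diag_w = diag diag_w (dP w0).
Proof.
rewrite {1}/diag_w Delta11_formulaE -relator_chain !raddfD /= !dPP_tens.
rewrite dP_x (dPP_word_diag GG t diag_w) relator1 relator_cycle twist_word_chain dP_last_cell dP_w.
rewrite twist_x dP_x; expand; cancel_sums.
Qed.

Lemma Delta11_bideg : supported (bideg 1 1) (Delta11_formula GG t).
Proof.
rewrite /Delta11_formula /Defs.Tj /Defs.Aj /Defs.Bj.
by repeat first [ apply: supportedD | apply: supportedN | apply: supported_sum => ? _
                | apply: supported_tens | apply: homogP_act | apply: supportedU ].
Qed.

Lemma tens_w_x_bideg : supported (bideg 2 0) (tens w0 << (gm (b last) (a last), cX n) >>).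
Proof. by apply: supported_tens; apply: supportedU. Qed.

Lemma tens_x_w_bideg : supported (bideg 0 2) (tens x0 w0).
Proof. by apply: supported_tens; apply: supportedU. Qed.

Lemma diag_w_homog : homogPP 2 diag_w.
Proof.
apply: supportedD; first apply: supportedD.
- exact: homogPP_bideg tens_w_x_bideg.
- exact: homogPP_bideg Delta11_bideg.
- exact: homogPP_bideg tens_x_w_bideg.
Qed.

Lemma projPP_diag_w :
  projPP 1 1 diag_w = Delta11_formula GG t /\ projPP 0 2 diag_w = tens x0 w0.
Proof. exact: projPP_deg2 tens_w_x_bideg Delta11_bideg tens_x_w_bideg. Qed.

End SurfaceGroup.

Unset Implicit Arguments.

Theorem mainTheorem2 (n : nat) (hn : (0 < n)%N) (G : choiceType)
  (GG : group_on G) (t : gen n -> G) (HG : is_presentation GG t) :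
  exists D : Pmod G n -> PPmod G n,
    is_diag_approx GG t D /\
    [/\         D (xg n GG) = tens (xg n GG) (xg n GG),
        forall i : 'I_n, D (yg GG i) =
          tens (yg GG i) (act GG (gr (t (inl i))) (xg n GG)) + tens (xg n GG) (yg GG i),
        forall i : 'I_n, D (zg GG i) =
          tens (zg GG i) (act GG (gr (t (inr i))) (xg n GG)) + tens (xg n GG) (zg GG i),
        projPP 0 2 (D (wg n GG)) = tens (xg n GG) (wg n GG)
      & projPP 1 1 (D (wg n GG)) = Delta11_formula GG t].
Proof.
case: n hn t HG => // m _ t [relator1 _].
exists (diag GG t (diag_w GG t)); split.
  by apply: diag_approx; [exact: diag_w_homog | exact: dPP_diag_w].
have [proj11 proj02] := projPP_diag_w GG t.
by split=> [|i|i||]; rewrite diag_cellE.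
Qed.
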